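(* Let $A$ be a finite alphabet and $d: A^n \to A$ a block map. Then $d$ is regressive if and only if the induced sliding block code $\tau_d: A^{\mathbb{N}} \to A^{\mathbb{N}}$ $*$-commutes with the shift map $\sigma$.
   Context: $A$ is a finite set; $\mathbb{N}=\{1,2,3,\dots\}$; $A^{\mathbb{N}}$ is the set of one-sided infinite sequences $x=x_1x_2\cdots$ over $A$; $\sigma(x_1x_2x_3\cdots)=x_2x_3\cdots$. A block map is a function $d: A^n \to A$, and $\tau_d: A^{\mathbb{N}}\to A^{\mathbb{N}}$ is defined by $\tau_d(x)_i = d(x_i \cdots x_{i+n-1})$. The block map $d$ is regressive if for each fixed $x_1 \cdots x_{n-1} \in A^{n-1}$ the function $A\to A$, $a\mapsto d(a x_1 \cdots x_{n-1})$, is bijective. Two functions $S,T: X\to X$ on a set $X$ $*$-commute if $ST=TS$ and for every $(y,z)\in X\times X$ with $S(y)=T(z)$ there exists a unique $x\in X$ with $T(x)=y$ and $S(x)=z$. *)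

From mathcomp Require Import all_boot.
Set Implicit Arguments. Unset Strict Implicit. Unset Printing Implicit Defensive.

(* One-sided sequences x = x_1 x_2 ... over A are functions nat -> A,
   with x 0 playing the role of x_1. *)
Definition seqN (A : Type) := nat -> A.

Definition shift (A : Type) (x : seqN A) : seqN A := fun i => x i.+1.

(* Block maps d : A^(m+1) -> A (windows of length n = m+1 >= 1). *)
Definition window (A : Type) (m : nat) (x : seqN A) (i : nat) : m.+1.-tuple A :=
  [tuple x (i + val k) | k < m.+1].

Definition tau (A : Type) (m : nat) (d : m.+1.-tuple A -> A) (x : seqN A) : seqN A :=
  fun i => d (window m x i).

Definition regressive (A : Type) (m : nat) (d : m.+1.-tuple A -> A) : Prop :=
  forall w : m.-tuple A, bijective (fun a : A => d (cons_tuple a w)).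

Definition star_commute (X : Type) (S T : X -> X) : Prop :=
  (forall x, S (T x) = T (S x)) /\
  (forall y z, S y = T z -> exists! x, T x = y /\ S x = z).

(* A preimage of (y, z) under (shift, tau d) is a sequence a y whose first letter a
   solves d(a y_1 ... y_m) = z_1, and the remaining equations reduce to the compatibility
   tau d y = shift z.  So unique preimages for all compatible (y, z) amount to unique
   solutions a, i.e. to bijectivity of a |-> d(a w) for every word w, as every w is a
   prefix of some y. *)
From Stdlib Require Import FunctionalExtensionality.
From mathcomp Require Import all_boot.

Set Implicit Arguments.
Unset Strict Implicit.
Unset Printing Implicit Defensive.

Section Sequences.

Variable A : Type.

Definition scons (a : A) (y : seqN A) : seqN A :=
  fun i => if i is i'.+1 then y i' else a.

Definition prefix (m : nat) (y : seqN A) : m.-tuple A := [tuple y (val k) | k < m].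

Lemma scons_eta (x : seqN A) : scons (x 0) (shift x) = x.
Proof. by apply: functional_extensionality => -[]. Qed.

Lemma scons_eqE a y z : (scons a y = z) <-> (a = z 0 /\ y = shift z).
Proof.
split=> [<- // | [-> ->]]; exact: scons_eta.
Qed.

Lemma prefix_nth m (w : m.-tuple A) a : prefix m (fun i => nth a w i) = w.
Proof. by apply: eq_from_tnth => k; rewrite tnth_mktuple (tnth_nth a). Qed.

Lemma window_shift m (x : seqN A) i : window m x i.+1 = window m (shift x) i.
Proof. by apply: eq_from_tnth => k; rewrite !tnth_mktuple addSn. Qed.

Lemma window0_scons m a y : window m (scons a y) 0 = cons_tuple a (prefix m y).
Proof.
apply: eq_from_tnth => -[[|k] lt_k_m1]; rewrite tnth_mktuple //.
rewrite (tnth_nth a) /= (nth_map (Ordinal (lt_k_m1 : k < m))) ?size_enum_ord //.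
by rewrite nth_enum_ord.
Qed.

Variables (m : nat) (d : m.+1.-tuple A -> A).

Lemma tau_shift x : tau d (shift x) = shift (tau d x).
Proof. by apply: functional_extensionality => i; rewrite /tau -window_shift. Qed.

Lemma tau_scons a y : tau d (scons a y) = scons (d (cons_tuple a (prefix m y))) (tau d y).
Proof.
by apply: functional_extensionality => -[|i]; rewrite /tau ?window0_scons.
Qed.

Lemma shift_tau_preimage y z :
  tau d y = shift z ->
  (exists! x, shift x = y /\ tau d x = z) <-> (exists! a, d (cons_tuple a (prefix m y)) = z 0).
Proof.
move=> compat_yz.
have preimageE a : tau d (scons a y) = z <-> d (cons_tuple a (prefix m y)) = z 0.
  by rewrite tau_scons; split=> [/scons_eqE[] | da]; last apply/scons_eqE.
split=> [[x [[shift_x tau_x] uniq_x]] | [a [da uniq_a]]].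
- exists (x 0); split.
  + by apply/preimageE; rewrite -shift_x scons_eta.
  + move=> b /preimageE tau_b.
    by rewrite (uniq_x (scons b y)).
- exists (scons a y); split; first by split; last exact/preimageE.
  move=> x [shift_x tau_x].
  have x_eta : x = scons (x 0) y by rewrite -shift_x scons_eta.
  rewrite x_eta (uniq_a (x 0)) //.
  by apply/preimageE; rewrite -x_eta.
Qed.

End Sequences.

Theorem theorem4p9 (A : finType) (m : nat) (d : m.+1.-tuple A -> A) :
  regressive d <-> star_commute (tau d) (@shift A).
Proof.
split=> [reg_d | [_ preimage_uniq] w].
- split=> [x | y z compat_yz]; first exact: tau_shift.
  apply/(shift_tau_preimage compat_yz).
  have [g dg gd] := reg_d (prefix m y).
  by exists (g (z 0)); split=> [|a <-]; rewrite ?gd ?dg.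
- apply: injF_bij => a b dab.
  pose y : seqN A := fun i => nth a w i.
  pose z := scons (d (cons_tuple a w)) (tau d y).
  have /(shift_tau_preimage (erefl : tau d y = shift z)) [c [_ uniq_c]] :=
    preimage_uniq y z erefl.
  rewrite /= prefix_nth in uniq_c.
  by rewrite -(uniq_c a) // -(uniq_c b).
Qed.
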